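(* Let $A,B\in\mathrm{SL}_2\mathbb{Z}_{\ge0}$ be noncommuting, well oriented, with $\mathrm{tr}(A)<\mathrm{tr}(B)$ and $\mathrm{tr}(AB)=\mathrm{tr}(B^2)$. Fix a (possibly empty) word $w$ and an integer $s\ge0$. Then: (1) $[wab(ab^2)^sab^3]<[wab^2(ab^2)^sab^2]$; (2) $[wab^3(ab^2)^sab]<[wab^2(ab^2)^sab^2]$, provided $w$ is empty or begins with $a$.
   Context: Words are finite strings over $\{a,b\}$; $\phi$ is the monoid homomorphism with $\phi(a)=A,\phi(b)=B$, and $[w]=\mathrm{tr}(\phi(w))$. Fixed points are for the Möbius action on $\partial\mathcal{H}=\mathbb{P}^1\mathbb{R}$; $\alpha^\pm$ ($\beta^\pm$) are the attracting/repelling fixed points of $A$ ($B$), both equal to the unique fixed point if parabolic. With $\partial\mathcal{H}$ cyclically ordered and $[\alpha,\beta]$ the closed counterclockwise interval from $\alpha$ to $\beta$, let $I^+=\{\alpha^+\}$ if $\alpha^+=\beta^+$, and otherwise the one of $[\alpha^+,\beta^+],[\beta^+,\alpha^+]$ mapped into itself by both $A$ and $B$ (if it exists); define $I^-$ likewise with $A^{-1},B^{-1},\alpha^-,\beta^-$. The pair is coherently oriented if both exist, and well oriented if $A,B$ is coherently oriented but $A,B^{-1}$ is not. *)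

From HB Require Import structures.
From mathcomp Require Import all_boot all_order all_algebra.
From mathcomp Require Import Rstruct.
Set Implicit Arguments. Unset Strict Implicit. Unset Printing Implicit Defensive.
Import Order.TTheory GRing.Theory Num.Theory.
Local Open Scope ring_scope.

Inductive letter := La | Lb.

Definition phi (A B : 'M[int]_2) (w : seq letter) : 'M[int]_2 :=
  foldr (fun x M => (match x with La => A | Lb => B end) *m M) 1%:M w.

Definition trw (A B : 'M[int]_2) (w : seq letter) : int := \tr (phi A B w).

Definition SL2nonneg (A : 'M[int]_2) : Prop :=
  (forall i j, 0 <= A i j) /\ \det A = 1.

Section Proj.
Variable R : realFieldType.

(* The boundary P^1 R = R u {oo}; None is the point oo. *)
Definition P1 := option R.

Definition i0 : 'I_2 := ord0.
Definition i1 : 'I_2 := ord_max.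

Definition mob (M : 'M[R]_2) (z : P1) : P1 :=
  match z with
  | Some x => let d := M i1 i0 * x + M i1 i1 in
              if d == 0 then None else Some ((M i0 i0 * x + M i0 i1) / d)
  | None => if M i1 i0 == 0 then None else Some (M i0 i0 / M i1 i0)
  end.

Definition cls (v : 'cV[R]_2) : P1 :=
  if v i1 ord0 == 0 then None else Some (v i0 ord0 / v i1 ord0).

(* Attracting (resp. repelling) fixed point: the fixed point whose eigenline has
   eigenvalue of modulus >= 1 (resp. <= 1); for det 1 hyperbolic this is the
   eigenvalue of modulus > 1 (resp. < 1), i.e. |derivative| < 1 (resp. > 1);
   for parabolic both coincide with the unique fixed point. *)
Definition attr_fp (M : 'M[R]_2) (z : P1) : Prop :=
  exists (v : 'cV[R]_2) (l : R), v != 0 /\ M *m v = l *: v /\ 1 <= `|l| /\ cls v = z.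
Definition rep_fp (M : 'M[R]_2) (z : P1) : Prop :=
  exists (v : 'cV[R]_2) (l : R), v != 0 /\ M *m v = l *: v /\ `|l| <= 1 /\ cls v = z.

(* Closed counterclockwise interval [a,b] of P^1 R = boundary of the upper half
   plane (counterclockwise = increasing along R, then through oo). *)
Definition ccw (a b : P1) (z : P1) : bool :=
  match a, b with
  | Some x, Some y =>
      if x <= y then (if z is Some t then (x <= t) && (t <= y) else false)
      else (if z is Some t then (x <= t) || (t <= y) else true)
  | Some x, None => if z is Some t then x <= t else true
  | None, Some y => if z is Some t then t <= y else true
  | None, None => z == None
  end.

Definition maps_into (M : 'M[R]_2) (I : P1 -> bool) : Prop :=
  forall z, I z -> I (mob M z).

Definition I_exists (M N : 'M[R]_2) (a b : P1) : Prop :=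
  a = b \/
  (maps_into M (ccw a b) /\ maps_into N (ccw a b)) \/
  (maps_into M (ccw b a) /\ maps_into N (ccw b a)).

Definition coherently_oriented (A B : 'M[R]_2) : Prop :=
  forall ap am bp bm : P1,
    attr_fp A ap -> rep_fp A am -> attr_fp B bp -> rep_fp B bm ->
    I_exists A B ap bp /\ I_exists (invmx A) (invmx B) am bm.

Definition well_oriented (A B : 'M[R]_2) : Prop :=
  coherently_oriented A B /\ ~ coherently_oriented A (invmx B).

End Proj.

Definition toR (A : 'M[int]_2) : 'M[Rdefinitions.R]_2 := map_mx (fun x : int => x%:~R) A.

Fixpoint pw (s : nat) (u : seq letter) : seq letter :=
  match s with O => [::] | S s' => u ++ pw s' u end.

From HB Require Import structures.
From mathcomp Require Import all_boot all_order all_algebra.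
From mathcomp Require Import Rstruct.
From mathcomp Require Import zify ring lra.
Set Implicit Arguments.
Unset Strict Implicit.
Import Order.TTheory GRing.Theory Num.Theory.
Local Open Scope ring_scope.

(* P = ABB has determinant 1 and trace at least 2, so by Cayley-Hamilton
   P^(s+1) = f P - g with 0 <= g < f.  Each of the compared traces is thus f times
   the trace of the corresponding word with s = 0 minus the same quantity
   g tr(W P), which reduces both claims to s = 0.  There Cayley-Hamilton rewrites
   the difference of the two products (multiplied by A on the right in claim (2)
   when w starts with a, using cyclicity of the trace) as c0 + c1 A + c2 B + c3 AB.
   Since tr AB = tr B^2 = (tr B)^2 - 2 and 2 <= tr A < tr B, the coefficients
   c1, c2, c3 are nonnegative with positive sum c0 + c1 + c2 + c3; as W, A, B and
   AB have nonnegative entries dominating the identity matrix, the trace of W times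
   this combination is positive. *)

Lemma ord2P (i : 'I_2) : i = 0 \/ i = 1.
Proof. by case: i => [[|[|//]] ?]; [left | right]; apply: val_inj. Qed.

Section Mx2.
Variable R : comNzRingType.
Implicit Types M N : 'M[R]_2.

Let ord2_lift0 : lift (0 : 'I_2) (0 : 'I_1) = 1. Proof. exact: val_inj. Qed.
Let ord2_lift1 : lift (1 : 'I_2) (0 : 'I_1) = 0. Proof. exact: val_inj. Qed.

Lemma mxtrace2 M : \tr M = M 0 0 + M 1 1.
Proof. by rewrite /mxtrace !big_ord_recl big_ord0 addr0 ord2_lift0. Qed.

Lemma det_mx2 M : \det M = M 0 0 * M 1 1 - M 0 1 * M 1 0.
Proof.
rewrite (expand_det_row M 0) !big_ord_recl big_ord0 /cofactor !det_mx11 !mxE /=.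
by rewrite !ord2_lift0 ord2_lift1 addr0 expr0 expr1 !mul1r mulN1r mulrN.
Qed.

Lemma mulmx2E M N i j : (M *m N) i j = M i 0 * N 0 j + M i 1 * N 1 j.
Proof. by rewrite !mxE !big_ord_recl big_ord0 addr0 ord2_lift0. Qed.

Lemma mx2_eq M N :
  M 0 0 = N 0 0 -> M 0 1 = N 0 1 -> M 1 0 = N 1 0 -> M 1 1 = N 1 1 -> M = N.
Proof.
move=> e00 e01 e10 e11; apply/matrixP => i j.
by case: (ord2P i) => ->; case: (ord2P j) => ->.
Qed.
End Mx2.

Ltac mx2_ring := rewrite ?mxtrace2 ?det_mx2; apply: mx2_eq; rewrite !(mulmx2E, mxE) /=; ring.

Lemma mx2_sqr (R : comNzRingType) (M : 'M[R]_2) : M *m M = \tr M *: M - (\det M)%:M.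
Proof. mx2_ring. Qed.

Lemma mx2_exp_chebyshev (R : realDomainType) (P : 'M[R]_2) :
  \det P = 1 -> 2 <= \tr P ->
  forall n, exists f g : R, [/\ 0 <= g, g < f & P ^+ n.+1 = f *: P - g%:M].
Proof.
move=> detP trP; elim=> [|n [f [g [g_ge0 g_lt_f Pn]]]].
  by exists 1, 0; rewrite expr1 scale1r raddf0 subr0.
exists (f * \tr P - g), f; split; [lra | nra |].
rewrite exprS Pn -mulmxE mulmxBr -scalemxAr mx2_sqr detP mul_mx_scalar.
apply/matrixP => i j; rewrite !mxE; ring.
Qed.

Lemma mxtrace_mulmx2_gt0 (R : numDomainType) (M N : 'M[R]_2) :
  (forall i j, 0 <= M i j) -> (forall i j, 0 <= N i j) -> 0 < M 0 0 -> 0 < N 0 0 ->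
  0 < \tr (M *m N).
Proof.
move=> M_ge0 N_ge0 M00 N00; rewrite mxtrace2 !mulmx2E.
apply: ltr_wpDr; first by rewrite addr_ge0 ?mulr_ge0.
by apply: ltr_wpDr; rewrite ?mulr_ge0 ?mulr_gt0.
Qed.

Section Words.
Variables A B : 'M[int]_2.

Lemma phi_cat u v : phi A B (u ++ v) = phi A B u *m phi A B v.
Proof. by elim: u => [|x u IHu] /=; rewrite ?mul1mx // IHu mulmxA. Qed.

Lemma phi_pw s u : phi A B (pw s u) = phi A B u ^+ s.
Proof. by elim: s => [|s IHs] //=; rewrite phi_cat IHs exprS mulmxE. Qed.

Lemma trw_cat_pw_chebyshev w u x v s (Y Z : 'M[int]_2) (f g : int) :
    phi A B x ^+ s.+1 = f *: phi A B x - g%:M ->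
    phi A B v = phi A B x *m Y -> phi A B u *m Y = Z ->
  trw A B (w ++ u ++ pw s x ++ v) =
    f * trw A B (w ++ u ++ v) - g * \tr (phi A B w *m Z).
Proof.
move=> xs v_xY uY_Z; rewrite /trw -uY_Z !phi_cat phi_pw v_xY !mulmxA.
rewrite -(mulmxA _ (_ ^+ s)).
have -> : phi A B x ^+ s *m phi A B x = f *: phi A B x - g%:M by rewrite -xs exprSr.
rewrite mulmxBr mulmxBl raddfB /= -scalemxAr -scalemxAl mxtraceZ.
by rewrite mul_mx_scalar -scalemxAl mxtraceZ.
Qed.
End Words.

Lemma SL2nonneg1 : SL2nonneg 1%:M.
Proof. by split=> [i j|]; rewrite ?det1 // mxE ler0n. Qed.

Lemma SL2nonneg_mul (M N : 'M[int]_2) : SL2nonneg M -> SL2nonneg N -> SL2nonneg (M *m N).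
Proof.
move=> [M_ge0 detM] [N_ge0 detN]; split=> [i j|]; last by rewrite det_mulmx detM detN mulr1.
by rewrite mulmx2E addr_ge0 ?mulr_ge0.
Qed.

Lemma SL2nonneg_phi (A B : 'M[int]_2) w : SL2nonneg A -> SL2nonneg B -> SL2nonneg (phi A B w).
Proof.
by move=> SA SB; elim: w => [|[] w IHw]; [exact: SL2nonneg1 | exact: SL2nonneg_mul ..].
Qed.

Lemma SL2nonneg_ge1mx (M : 'M[int]_2) : SL2nonneg M -> forall i j, (i == j)%:R <= M i j.
Proof.
move=> [M_ge0 detM] i j; case: eqP => [<-|_]; last exact: M_ge0.
move: detM (M_ge0 0 0) (M_ge0 0 1) (M_ge0 1 0) (M_ge0 1 1); rewrite det_mx2 mulr1n.
(* zify does not identify the entries [M i j] across structure instances: abstract them. *)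
by case: (ord2P i) => ->; move: (M 0 0) (M 0 1) (M 1 0) (M 1 1) => ? ? ? ?; nia.
Qed.

Lemma SL2nonneg_tr_ge2 (M : 'M[int]_2) : SL2nonneg M -> 2 <= \tr M.
Proof.
move=> SM; rewrite mxtrace2.
exact: le_trans (lerD (SL2nonneg_ge1mx SM 0 0) (SL2nonneg_ge1mx SM 1 1)).
Qed.

Lemma mxtrace_SL2nonneg_comb_gt0 (W M1 M2 M3 : 'M[int]_2) (c0 c1 c2 c3 : int) :
    SL2nonneg W -> SL2nonneg M1 -> SL2nonneg M2 -> SL2nonneg M3 ->
    0 <= c1 -> 0 <= c2 -> 0 <= c3 -> 0 < c0 + c1 + c2 + c3 ->
  0 < \tr (W *m (c0%:M + c1 *: M1 + c2 *: M2 + c3 *: M3)).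
Proof.
move=> SW S1 S2 S3 c1_ge0 c2_ge0 c3_ge0 c_gt0.
set N := _ + _ *: M3.
have N_ge i j : (c0 + c1 + c2 + c3) * (i == j)%:R <= N i j.
  rewrite !mxE -[c0 *+ _]mulr_natr !mulrDl -!addrA lerD2l.
  by rewrite !lerD ?ler_wpM2l ?SL2nonneg_ge1mx.
have N_ge0 i j : 0 <= N i j by apply: le_trans (N_ge i j); rewrite mulr_ge0 ?ler0n ?ltW.
apply: mxtrace_mulmx2_gt0 => //; first exact: SW.1.
  exact: lt_le_trans (SL2nonneg_ge1mx SW 0 0).
by apply: lt_le_trans (N_ge 0 0); rewrite mulr1.
Qed.

Section CayleyHamiltonReductions.
Variables (R : comNzRingType) (A B : 'M[R]_2).
Local Notation a := (\tr A).
Local Notation b := (\tr B).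
Local Notation t := (\tr (A *m B)).
Local Notation dA := (\det A).
Local Notation dB := (\det B).

Lemma mx2_abbabb_sub_ababbb :
  A *m B *m B *m A *m B *m B - A *m B *m A *m B *m B *m B =
    (- (2 * dA * dB ^+ 2))%:M + (a * dB ^+ 2) *: A + (b * dA * dB) *: B
    + (dB * (t - a * b)) *: (A *m B).
Proof. mx2_ring. Qed.

Lemma mxtrace_abbabb_sub_abbbab :
  \tr (A *m B *m B *m A *m B *m B) - \tr (A *m B *m B *m B *m A *m B) =
    dA * dB * b ^+ 2 - 4 * dA * dB ^+ 2 + a ^+ 2 * dB ^+ 2 + t * (t - a * b) * dB.
Proof. rewrite !mxtrace2 !det_mx2 !mulmx2E; ring. Qed.

Lemma mx2_abbabb_sub_abbbab_mulmx :
  (A *m B *m B *m A *m B *m B - A *m B *m B *m B *m A *m B) *m A =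
    (a * b ^+ 2 * dA * dB - b * t * dA * dB - a * dA * dB ^+ 2)%:M
    + (t ^+ 2 * dB - a * b * t * dB + a ^+ 2 * dB ^+ 2 - 2 * dA * dB ^+ 2) *: A
    + (t * dA * dB - a * b * dA * dB) *: B + (b * dA * dB) *: (A *m B).
Proof. mx2_ring. Qed.
End CayleyHamiltonReductions.

Section TraceComparisons.
Variables (A B : 'M[int]_2) (a b : int).
Hypotheses (SA : SL2nonneg A) (SB : SL2nonneg B).
Hypotheses (trA : \tr A = a) (trB : \tr B = b) (a_lt_b : a < b).
Hypothesis trAB : \tr (A *m B) = b ^+ 2 - 2.

Let detA : \det A = 1. Proof. by case: SA. Qed.
Let detB : \det B = 1. Proof. by case: SB. Qed.
Let SAB : SL2nonneg (A *m B). Proof. exact: SL2nonneg_mul. Qed.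
Let a_ge2 : 2 <= a. Proof. by rewrite -trA SL2nonneg_tr_ge2. Qed.
Let ab_gap : 1 <= b ^+ 2 - 2 - a * b. Proof. nia. Qed.

Lemma mxtrace_ababbb_lt_abbabb W : SL2nonneg W ->
  \tr (W *m (A *m B *m A *m B *m B *m B)) < \tr (W *m (A *m B *m B *m A *m B *m B)).
Proof.
move=> SW; rewrite -subr_gt0 -raddfB -mulmxBr mx2_abbabb_sub_ababbb.
rewrite detA detB trA trB trAB expr1n !mulr1 !mul1r.
by apply: mxtrace_SL2nonneg_comb_gt0 => //; nia.
Qed.

Lemma mxtrace_abbbab_lt_abbabb :
  \tr (A *m B *m B *m B *m A *m B) < \tr (A *m B *m B *m A *m B *m B).
Proof.
rewrite -subr_gt0 mxtrace_abbabb_sub_abbbab detA detB trA trB trAB expr1n !mulr1 !mul1r.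
nia.
Qed.

Lemma mxtrace_a_abbbab_lt_abbabb W : SL2nonneg W ->
  \tr (A *m W *m (A *m B *m B *m B *m A *m B)) < \tr (A *m W *m (A *m B *m B *m A *m B *m B)).
Proof.
move=> SW; rewrite -subr_gt0 -raddfB /= -mulmxBr mxtrace_mulC mulmxA mxtrace_mulC.
rewrite mx2_abbabb_sub_abbbab_mulmx detA detB trA trB trAB expr1n !mulr1.
by apply: mxtrace_SL2nonneg_comb_gt0 => //; nia.
Qed.

Lemma trw_ab_abbb_lt_abb_abb w :
  trw A B (w ++ [:: La; Lb] ++ [:: La; Lb; Lb; Lb])
    < trw A B (w ++ [:: La; Lb; Lb] ++ [:: La; Lb; Lb]).
Proof.
have := mxtrace_ababbb_lt_abbabb (SL2nonneg_phi w SA SB).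
by rewrite /trw !phi_cat /= !mulmx1 !mulmxA.
Qed.

Lemma trw_abbb_ab_lt_abb_abb w : (w = [::] \/ exists w', w = La :: w') ->
  trw A B (w ++ [:: La; Lb; Lb; Lb] ++ [:: La; Lb])
    < trw A B (w ++ [:: La; Lb; Lb] ++ [:: La; Lb; Lb]).
Proof.
case=> [-> | [w' ->]].
  by have := mxtrace_abbbab_lt_abbabb; rewrite /trw /= !mulmx1 !mulmxA.
have := mxtrace_a_abbbab_lt_abbabb (SL2nonneg_phi w' SA SB).
by rewrite /trw /= !phi_cat /= !mulmx1 !mulmxA.
Qed.
End TraceComparisons.

Theorem lemma6p1 (A B : 'M[int]_2) (w : seq letter) (s : nat) :
  SL2nonneg A -> SL2nonneg B -> A *m B != B *m A ->
  well_oriented (toR A) (toR B) ->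
  \tr A < \tr B -> \tr (A *m B) = \tr (B *m B) ->
  trw A B (w ++ [:: La; Lb] ++ pw s [:: La; Lb; Lb] ++ [:: La; Lb; Lb; Lb])
    < trw A B (w ++ [:: La; Lb; Lb] ++ pw s [:: La; Lb; Lb] ++ [:: La; Lb; Lb])
  /\
  ((w = [::] \/ exists w', w = La :: w') ->
   trw A B (w ++ [:: La; Lb; Lb; Lb] ++ pw s [:: La; Lb; Lb] ++ [:: La; Lb])
    < trw A B (w ++ [:: La; Lb; Lb] ++ pw s [:: La; Lb; Lb] ++ [:: La; Lb; Lb])).
Proof.
move=> SA SB _ _ trA_lt_trB trAB.
have detB : \det B = 1 by case: SB.
have trAB_sqr : \tr (A *m B) = \tr B ^+ 2 - 2.
  by rewrite trAB mx2_sqr detB raddfB /= mxtraceZ mxtrace_scalar expr2.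
set P := phi A B [:: La; Lb; Lb].
have SP : SL2nonneg P by exact: SL2nonneg_phi.
have [f [g [g_ge0 g_lt_f Ps]]] := mx2_exp_chebyshev SP.2 (SL2nonneg_tr_ge2 SP) s.
have f_gt0 : 0 < f := le_lt_trans g_ge0 g_lt_f.
have B_unit : B \in unitmx by rewrite unitmxE detB unitr1.
have ab_B : phi A B [:: La; Lb] *m B = P by rewrite /P /= !mulmx1 mulmxA.
have P_B : phi A B [:: La; Lb; Lb; Lb] = P *m B by rewrite /P /= !mulmx1 !mulmxA.
have P_invB : phi A B [:: La; Lb] = P *m invmx B by rewrite -ab_B mulmxK.
have abbb_invB : phi A B [:: La; Lb; Lb; Lb] *m invmx B = P by rewrite P_B mulmxK.
rewrite (trw_cat_pw_chebyshev w Ps P_B ab_B).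
rewrite (trw_cat_pw_chebyshev w Ps (esym (mulmx1 P)) (mulmx1 P)).
rewrite (trw_cat_pw_chebyshev w Ps P_invB abbb_invB).
rewrite !ltrD2r !ltr_pM2l //; split.
  exact: (trw_ab_abbb_lt_abb_abb SA SB erefl erefl trA_lt_trB trAB_sqr).
exact: (trw_abbb_ab_lt_abb_abb SA SB erefl erefl trA_lt_trB trAB_sqr).
Qed.
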